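(* With the notation of the context, $\rho(C_1)$ is a self-orthogonal additive code with $\rho(C_1)^\perp=\rho(C_1^\perp)$, $|\rho(C_1)|=2^{nn_2-m(n-2k)}$, $|\rho(C_1^\perp)|=2^{nn_2+m(n-2k)}$, so it defines an $[[nn_2,m(n-2k)]]$ stabilizer quantum code $Q$ (of rate $r(1-2r')$ with $r=m/n_2$, $r'=k/n$); moreover every vector of $\rho(C_1^\perp)\setminus\rho(C_1)$ has weight at least $d_2(k+1)$. Consequently the relative minimum distance $\delta$ of $Q$ satisfies $\delta\ge \frac{d_2}{n_2}\,r'$; in particular, if $d_2/n_2\ge H_4^{-1}\!\left(\frac{1-r}{2}\right)$ then $\delta\ge r'\,H_4^{-1}\!\left(\frac{1-r}{2}\right)$.
   Context: $\mathbb{F}_4=\{0,1,\omega,\omega^2\}$, $\omega^2=\omega+1$, $\bar x=x^2$; trace inner product $\langle u,v\rangle=\sum_i(u_i\bar v_i+\bar u_iv_i)\in\mathbb{F}_2$; additive codes are $\mathbb{F}_2$-subspaces of $\mathbb{F}_4^N$, $C^\perp$ is the trace dual, self-orthogonal means $C\subseteq C^\perp$; weight = number of nonzero coordinates; an $[[N,K,D]]$ stabilizer code is given by a self-orthogonal additive $C$ with $|C|=2^{N-K}$ such that all vectors of $C^\perp\setminus C$ have weight $\ge D$; relative minimum distance is $D/N$. $H_4(x)=-x\log_4\frac x3-(1-x)\log_4(1-x)$, and $H_4^{-1}$ is the inverse of its restriction to $(0,3/4]$. Outer code (quantum Reed–Solomon code): let $m\ge2$, $n=2^m-1$, and $1\le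 k\le 2^{m-1}-1$. Let $\alpha$ be a primitive element of $\mathbb{F}_{2^m}$ and $C_{\rm RS}\subseteq\mathbb{F}_{2^m}^n$ the cyclic Reed–Solomon code with generator polynomial $\prod_{i=0}^{n-k-1}(x-\alpha^i)$ (dimension $k$); its dual $C_{\rm RS}^\perp$ (standard inner product) has dimension $n-k$ and minimum distance $k+1$, and $C_{\rm RS}\subseteq C_{\rm RS}^\perp$. Fix a self-dual basis $\mathcal B=\{b_1,\dots,b_m\}$ of $\mathbb{F}_{2^m}$ over $\mathbb{F}_2$; the binary expansion of a code $D\subseteq\mathbb{F}_{2^m}^n$ is $\mathcal B(D)=\{(c_{ij})\in\mathbb{F}_2^{nm}:(\sum_j c_{ij}b_j)_i\in D\}$. Put $C_1=\omega\mathcal B(C_{\rm RS})+\bar\omega\mathcal B(C_{\rm RS})$ and $C_1^\perp=\omega\mathcal B(C_{\rm RS}^\perp)+\bar\omega\mathcal B(C_{\rm RS}^\perp)$, additive codes in $\mathbb{F}_4^{nm}$; $C_1^\perp$ is the trace dual of $C_1$. Write vectors of $\mathbb{F}_4^{nm}$ as $(v_1,\dots,v_n)$ with blocks $v_i\in\mathbb{F}_4^m$ (block $i$ = the $m$ coordinates coming from the $i$-th Reed–Solomon position). Inner code: let $C_2\subseteq C_2^\perp\subseteq\mathbb{F}_4^{n_2}$ define an $[[n_2,m,d_2]]$ stabilizer code ($|C_2|=2^{n_2-m}$). The trace inner product induces a nondegenerate symplectic form on the $2m$-dimensional $\mathbb{F}_2$-space $C_2^\perp/C_2$ by $\langle u+C_2,v+C_2\rangle=\langle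 u,v\rangle$. Let $\rho:\mathbb{F}_4^m\to C_2^\perp/C_2$ be an $\mathbb{F}_2$-linear bijection with $\langle\rho(u),\rho(v)\rangle=\langle u,v\rangle$. For $D\in\{C_1,C_1^\perp\}$ define $\rho(D)=\{(w_1,\dots,w_n)\in(\mathbb{F}_4^{n_2})^n:\ \exists (v_1,\dots,v_n)\in D \text{ with } w_i\in\rho(v_i)\ \forall i\}$ (each $w_i$ ranges over the whole coset $\rho(v_i)$). *)

From HB Require Import structures.
From mathcomp Require Import all_boot all_order all_algebra all_field.
From mathcomp Require Import all_classical all_reals all_analysis.
Set Implicit Arguments. Unset Strict Implicit. Unset Printing Implicit Defensive.
Import Order.TTheory GRing.Theory Num.Theory.
Local Open Scope ring_scope.

Section Codes.
Variable F : finFieldType. (* intended: F_4 *)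

(* trace inner product, valued in the prime field {0,1} of F *)
Definition tip (a b : nat) (u v : 'M[F]_(a, b)) : F :=
  \sum_(i < a) \sum_(j < b) (u i j * (v i j) ^+ 2 + (u i j) ^+ 2 * v i j).

Definition wt (a b : nat) (u : 'M[F]_(a, b)) : nat :=
  #|[set ij : 'I_a * 'I_b | u ij.1 ij.2 != 0]|.

Definition additive_code (a b : nat) (C : {set 'M[F]_(a, b)}) : Prop :=
  0 \in C /\ forall u v, u \in C -> v \in C -> u + v \in C.

Definition tdual (a b : nat) (C : {set 'M[F]_(a, b)}) : {set 'M[F]_(a, b)} :=
  [set v : 'M[F]_(a, b) | [forall u in C, tip u v == 0]].

Definition qmindist (a b : nat) (C Cp : {set 'M[F]_(a, b)}) : nat :=
  (\max_(d < (a * b).+1 | [forall v in Cp :\: C, (d <= wt v)%N]) d)%N.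
End Codes.

Section RS.
Variable K : finFieldType. (* intended: F_{2^m} *)

(* absolute trace K -> F_2 (values in {0,1} of K) *)
Definition abstr (m : nat) (x : K) : K := \sum_(l < m) x ^+ (2 ^ l).

Definition self_dual_basis (m : nat) (b : 'I_m -> K) : Prop :=
  (forall x : K, exists c : 'I_m -> bool, x = \sum_(j < m) (c j)%:R * b j) /\
  (forall i j : 'I_m, abstr m (b i * b j) = (i == j)%:R).

Definition RSgen (n k : nat) (alpha : K) : {poly K} :=
  \prod_(i < n - k) ('X - (alpha ^+ i)%:P).

Definition RScode (n k : nat) (alpha : K) : {set 'rV[K]_n} :=
  [set v : 'rV[K]_n | RSgen n k alpha %| \sum_(i < n) v ord0 i *: 'X^i].

Definition std_dual (n : nat) (C : {set 'rV[K]_n}) : {set 'rV[K]_n} :=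
  [set w : 'rV[K]_n | [forall v in C, \sum_(i < n) v ord0 i * w ord0 i == 0]].

Definition expand (n m : nat) (b : 'I_m -> K) (c : 'M[bool]_(n, m)) : 'rV[K]_n :=
  \row_(i < n) \sum_(j < m) (c i j)%:R * b j.
End RS.

(* C_1-type code  omega B(D) + bar(omega) B(D)  in F_4^{nm}, vectors written
   as n x m matrices (row i = block i) *)
Definition omega_code (F K : finFieldType) (omega : F) (n m : nat)
  (b : 'I_m -> K) (D : {set 'rV[K]_n}) : {set 'M[F]_(n, m)} :=
  [set M : 'M[F]_(n, m) | [exists c1 : 'M[bool]_(n, m), exists c2 : 'M[bool]_(n, m),
     [&& expand b c1 \in D, expand b c2 \in D &
         M == \matrix_(i, j) (omega * (c1 i j)%:R + omega ^+ 2 * (c2 i j)%:R)]]].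

(* rho(D): rho is given by a representative map r : F_4^m -> C_2^perp, the
   coset rho(u) being r u + C_2.  Vectors of (F_4^{n2})^n are n x n2 matrices. *)
Definition rho_code (F : finFieldType) (n m n2 : nat) (C2 : {set 'rV[F]_n2})
  (r : 'rV[F]_m -> 'rV[F]_n2) (D : {set 'M[F]_(n, m)}) : {set 'M[F]_(n, n2)} :=
  [set W : 'M[F]_(n, n2) | [exists V in D, [forall i : 'I_n, row i W - r (row i V) \in C2]]].

(* r represents an F_2-linear symplectic bijection F_4^m -> C2^perp / C2 *)
Definition symplectic_rep (F : finFieldType) (m n2 : nat) (C2 : {set 'rV[F]_n2})
  (r : 'rV[F]_m -> 'rV[F]_n2) : Prop :=
  [/\ forall u, r u \in tdual C2,
      forall u v, r (u + v) - r u - r v \in C2,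
      forall u v, r u - r v \in C2 -> u = v,
      forall w, w \in tdual C2 -> exists u, w - r u \in C2 &
      forall u v, tip (r u) (r v) = tip u v].

Definition H4 (R : realType) (x : R) : R :=
  - x * (ln (x / 3) / ln 4) - (1 - x) * (ln (1 - x) / ln 4).

(* Writing F_4 = F_2 omega + F_2 omega^2, the trace form pairs [omega a + omega^2 c] with
   [omega a' + omega^2 c'] to the parity of [a.c' + c.a'], and for a self-dual basis the
   absolute trace of the standard product of two expansions is the binary dot product of
   their coordinates.  Hence the trace dual of [omega B(D) + omega^2 B(D)] is the same
   construction applied to the standard dual of D, for every F_{2^m}-linear code D; since
   the Reed-Solomon code is self-orthogonal, so is C_1.  The symplectic bijection rho
   transports trace duality block by block, so rho(C_1)^perp = rho(C_1^perp), and
   |rho(D)| = |D| |C_2|^n.  A word of rho(C_1^perp) \ rho(C_1) comes from a nonzero V in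
   C_1^perp; a binary component of V is a nonzero word of C_RS^perp, which vanishes at
   alpha, ..., alpha^k and therefore has at least k + 1 nonzero entries, and each of the
   corresponding blocks of the word lies in C_2^perp \ C_2, so has weight at least d_2. *)

From Pilot Require Import Defs.
From HB Require Import structures.
From mathcomp Require Import all_boot all_order all_algebra all_field.
From mathcomp Require Import all_classical all_reals all_analysis.
From mathcomp Require Import ring zify.
Import Order.TTheory GRing.Theory Num.Theory.
Set Implicit Arguments. Unset Strict Implicit. Unset Printing Implicit Defensive.
Local Open Scope ring_scope.

Lemma natr_andb (R : nzSemiRingType) (a c : bool) : (a && c)%:R = a%:R * c%:R :> R.
Proof. by rewrite -natrM mulnb. Qed.

Lemma natr_bool_sqr (R : nzSemiRingType) (a : bool) : (a%:R : R) ^+ 2 = a%:R.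
Proof. by case: a; rewrite ?expr1n ?expr0n. Qed.

Lemma natr_bool_inj (R : nzSemiRingType) (x x' : bool) : x%:R = x'%:R :> R -> x = x'.
Proof. by case: x; case: x' => // /eqP; rewrite ?oner_eq0 // eq_sym oner_eq0. Qed.

Section Char2.
Variable R : comNzRingType.
Hypothesis pchar2 : 2 \in [pchar R].

Lemma sqrrD_pchar2 (x y : R) : (x + y) ^+ 2 = x ^+ 2 + y ^+ 2.
Proof. by rewrite sqrrD -mulr_natr (pcharf0 pchar2) mulr0 addr0. Qed.

Lemma exprD2n_pchar2 l (x y : R) : (x + y) ^+ (2 ^ l) = x ^+ (2 ^ l) + y ^+ (2 ^ l).
Proof. by elim: l => [|l IH]; rewrite ?expn0 ?expr1 // expnSr !exprM IH sqrrD_pchar2. Qed.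

Lemma natr_odd_pchar2 N : N%:R = (odd N)%:R :> R.
Proof. by rewrite -(GRing.natr_mod_pchar pchar2) modn2. Qed.

Lemma natr_eq0_pchar2 N : (N%:R == 0 :> R) = ~~ odd N.
Proof. by rewrite natr_odd_pchar2; case: (odd N); rewrite ?oner_eq0 ?eqxx. Qed.

Lemma natr_addb_pchar2 (a c : bool) : (a (+) c)%:R = a%:R + c%:R :> R.
Proof. by rewrite -natrD [RHS]natr_odd_pchar2 oddD !oddb. Qed.

Lemma oppmx_pchar2 a c (M : 'M[R]_(a, c)) : - M = M.
Proof. by apply/matrixP => i j; rewrite mxE (oppr_pchar2 pchar2). Qed.

Lemma submx_pchar2 a c (M N : 'M[R]_(a, c)) : M - N = M + N.
Proof. by rewrite oppmx_pchar2. Qed.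
End Char2.

Section TraceProduct.
Variable F : finFieldType.
Hypothesis pchar2 : 2 \in [pchar F].

Lemma tipC a c (u v : 'M[F]_(a, c)) : tip u v = tip v u.
Proof. by apply: eq_bigr => i _; apply: eq_bigr => j _; ring. Qed.

Lemma tipDl a c (u u' v : 'M[F]_(a, c)) : tip (u + u') v = tip u v + tip u' v.
Proof.
rewrite /tip -big_split /=; apply: eq_bigr => i _; rewrite -big_split /=.
by apply: eq_bigr => j _; rewrite !mxE sqrrD_pchar2 //; ring.
Qed.

Lemma tipDr a c (u v v' : 'M[F]_(a, c)) : tip u (v + v') = tip u v + tip u v'.
Proof. by rewrite tipC tipDl // !(tipC u). Qed.

Lemma tip0l a c (v : 'M[F]_(a, c)) : tip 0 v = 0.
Proof. by rewrite /tip big1 // => i _; rewrite big1 // => j _; rewrite mxE expr0n /=; ring. Qed.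

Lemma tip_sum_row a c (u v : 'M[F]_(a, c)) : tip u v = \sum_(i < a) tip (row i u) (row i v).
Proof. by apply: eq_bigr => i _; rewrite /tip big_ord1; apply: eq_bigr => j _; rewrite !mxE. Qed.

Lemma tdualD c (C : {set 'rV[F]_c}) : {in tdual C &, forall x y, x + y \in tdual C}.
Proof.
move=> x y /[!inE] /forall_inP hx /forall_inP hy; apply/forall_inP => u uC.
by rewrite tipDr (eqP (hx _ uC)) (eqP (hy _ uC)) addr0.
Qed.

Lemma wt_sum_row a c (u : 'M[F]_(a, c)) : wt u = (\sum_(i < a) wt (row i u))%N.
Proof.
rewrite /wt -sum1_card (eq_bigl (fun ij : 'I_a * 'I_c => u ij.1 ij.2 != 0)) => [|x]; last first.
  by rewrite inE.
rewrite -(pair_big_dep xpredT (fun i j => u i j != 0) (fun _ _ => 1%N)) /=.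
apply: eq_bigr => i _; rewrite -sum1_card.
rewrite (reindex (fun j : 'I_c => (ord0 : 'I_1, j))) /=; last first.
  by exists (fun ij : 'I_1 * 'I_c => ij.2) => // [[x y]] _ /=; rewrite (ord1 x).
by apply: eq_bigl => j; rewrite inE /= mxE.
Qed.
End TraceProduct.

Lemma wt_le (F : finFieldType) a c (u : 'M[F]_(a, c)) : (wt u <= a * c)%N.
Proof. by apply: leq_trans (max_card _) _; rewrite card_prod !card_ord. Qed.

Definition xor_bmx n m (a c : 'M[bool]_(n, m)) : 'M[bool]_(n, m) :=
  \matrix_(i, j) (a i j (+) c i j).

Definition dot_bmx n m (a c : 'M[bool]_(n, m)) : nat :=
  (\sum_(i < n) \sum_(j < m) (a i j && c i j))%N.

Lemma dot_bmx0l n m (a : 'M[bool]_(n, m)) : dot_bmx (const_mx false) a = 0%N.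
Proof. by rewrite /dot_bmx big1 // => i _; rewrite big1 // => j _; rewrite mxE. Qed.

Section F4.
Variables (F : finFieldType) (omega : F).
Hypothesis HF : #|F| = 4%N.
Hypothesis Homega : omega ^+ 2 = omega + 1.

Lemma pchar2_F4 : 2 \in [pchar F].
Proof. exact: (@card_finPcharP F 2 2). Qed.

Let twoF : 2 = 0 :> F := pcharf0 pchar2_F4.

Lemma omega3 : omega ^+ 3 = 1.
Proof. by ring: Homega twoF. Qed.

Lemma omega_add_sqr : omega + omega ^+ 2 = 1.
Proof. by ring: Homega twoF. Qed.

Definition F4_of_bits (x y : bool) : F := omega * x%:R + omega ^+ 2 * y%:R.

Lemma F4_of_bits00 : F4_of_bits false false = 0.
Proof. by rewrite /F4_of_bits !mulr0 addr0. Qed.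

Lemma F4_of_bits_fst x y :
  let z := F4_of_bits x y in omega * z + omega ^+ 2 * z ^+ 2 = x%:R.
Proof.
rewrite /= /F4_of_bits (sqrrD_pchar2 pchar2_F4) !exprMn !natr_bool_sqr.
move: (x%:R) (y%:R) => X Y.
by rewrite -[RHS]mul1r -omega_add_sqr; ring: omega3 twoF.
Qed.

Lemma F4_of_bits_snd x y :
  let z := F4_of_bits x y in omega ^+ 2 * z + omega * z ^+ 2 = y%:R.
Proof.
rewrite /= /F4_of_bits (sqrrD_pchar2 pchar2_F4) !exprMn !natr_bool_sqr.
move: (x%:R) (y%:R) => X Y.
by rewrite -[RHS]mul1r -omega_add_sqr; ring: omega3 twoF.
Qed.

Lemma F4_of_bits_inj x y x' y' : F4_of_bits x y = F4_of_bits x' y' -> x = x' /\ y = y'.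
Proof.
move=> E; split; apply: (@natr_bool_inj F).
  by rewrite -(F4_of_bits_fst x y) -(F4_of_bits_fst x' y') /= E.
by rewrite -(F4_of_bits_snd x y) -(F4_of_bits_snd x' y') /= E.
Qed.

Definition omega_mx n m (a c : 'M[bool]_(n, m)) : 'M[F]_(n, m) :=
  \matrix_(i, j) F4_of_bits (a i j) (c i j).

Lemma omega_mx_inj n m (a c a' c' : 'M[bool]_(n, m)) :
  omega_mx a c = omega_mx a' c' -> a = a' /\ c = c'.
Proof.
move=> E; have Eij i j : a i j = a' i j /\ c i j = c' i j.
  by apply: F4_of_bits_inj; have := congr1 (fun M : 'M[F]_(n, m) => M i j) E; rewrite !mxE.
by split; apply/matrixP => i j; have [] := Eij i j.
Qed.

Lemma omega_mx_surj n m (M : 'M[F]_(n, m)) : exists a c, M = omega_mx a c.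
Proof.
have [g _ gK] : bijective (fun p : 'M[bool]_(n, m) * 'M[bool]_(n, m) => omega_mx p.1 p.2).
  apply: inj_card_bij; first by move=> [a c] [a' c'] /= /omega_mx_inj [-> ->].
  by rewrite card_prod !card_mx HF card_bool -expnMn.
by exists (g M).1, (g M).2; rewrite gK.
Qed.

Lemma omega_mxD n m (a c a' c' : 'M[bool]_(n, m)) :
  omega_mx a c + omega_mx a' c' = omega_mx (xor_bmx a a') (xor_bmx c c').
Proof. by apply/matrixP => i j; rewrite !mxE /F4_of_bits !(natr_addb_pchar2 pchar2_F4); ring. Qed.

Lemma omega_mx0 n m : omega_mx (const_mx false) (const_mx false) = 0 :> 'M[F]_(n, m).
Proof. by apply/matrixP => i j; rewrite !mxE F4_of_bits00. Qed.

Lemma tip_omega_mx n m (c d a e : 'M[bool]_(n, m)) :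
  tip (omega_mx c d) (omega_mx a e) = (dot_bmx c e + dot_bmx d a)%:R.
Proof.
rewrite /tip /dot_bmx natrD !natr_sum -big_split /=; apply: eq_bigr => i _.
rewrite !natr_sum -big_split /=; apply: eq_bigr => j _.
rewrite !mxE !natr_andb /F4_of_bits !(sqrrD_pchar2 pchar2_F4) !exprMn !natr_bool_sqr.
move: ((c i j)%:R : F) ((d i j)%:R : F) ((a i j)%:R : F) ((e i j)%:R : F) => C D A E.
by rewrite -[RHS]mul1r -omega_add_sqr; ring: omega3 twoF.
Qed.
End F4.

Section SelfDualExpansion.
Variables (K : finFieldType) (m : nat) (b : 'I_m -> K).
Hypothesis pchar2 : 2 \in [pchar K].
Hypothesis Hb : self_dual_basis b.

Lemma abstrD (x y : K) : abstr m (x + y) = abstr m x + abstr m y.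
Proof.
by rewrite /abstr -big_split; apply: eq_bigr => l _; rewrite exprD2n_pchar2.
Qed.

Lemma abstr0 : abstr m (0 : K) = 0.
Proof. by rewrite /abstr big1 // => l _; rewrite expr0n expn_eq0. Qed.

Lemma abstr_sum I (r : seq I) (P : pred I) (f : I -> K) :
  abstr m (\sum_(i <- r | P i) f i) = \sum_(i <- r | P i) abstr m (f i).
Proof. exact: (big_morph _ abstrD abstr0). Qed.

Lemma abstr_natr_bool_mull (c : bool) (x : K) : abstr m (c%:R * x) = c%:R * abstr m x.
Proof. by case: c; rewrite ?mul1r ?mul0r ?abstr0. Qed.

Lemma abstr_basis_coord (e : 'I_m -> bool) j :
  abstr m (b j * \sum_(j' < m) (e j')%:R * b j') = (e j)%:R.
Proof.
rewrite mulr_sumr abstr_sum (bigD1 j) //= big1 ?addr0 => [|j' nj].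
  by rewrite mulrCA abstr_natr_bool_mull (Hb.2 j j) eqxx mulr1.
by rewrite mulrCA abstr_natr_bool_mull (Hb.2 j j') eq_sym (negbTE nj) mulr0.
Qed.

Lemma abstr_nondegenerate (z : K) : (0 < m)%N -> (forall l : K, abstr m (l * z) = 0) -> z = 0.
Proof.
move=> m_gt0 Hz; apply: contraTeq isT => z_neq0.
pose i0 : 'I_m := Ordinal m_gt0.
by have := Hz (b i0 * b i0 / z); rewrite mulfVK // (Hb.2 i0 i0) eqxx => /eqP; rewrite oner_eq0.
Qed.

Lemma abstr_dot_expand n (c d : 'M[bool]_(n, m)) :
  abstr m (\sum_(i < n) Defs.expand b c 0 i * Defs.expand b d 0 i) = (dot_bmx c d)%:R.
Proof.
rewrite abstr_sum /dot_bmx natr_sum; apply: eq_bigr => i _; rewrite !mxE.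
rewrite mulr_suml abstr_sum natr_sum; apply: eq_bigr => j _.
by rewrite -mulrA abstr_natr_bool_mull abstr_basis_coord natr_andb.
Qed.

Lemma expand_basis_inj n : injective (@Defs.expand K n m b).
Proof.
move=> c c' E; apply/matrixP => i j; apply: (@natr_bool_inj K).
have := congr1 (fun v : 'rV[K]_n => abstr m (b j * v 0 i)) E.
by rewrite /= !mxE !abstr_basis_coord.
Qed.

Lemma expand_basis_surj n : #|K| = (2 ^ m)%N ->
  forall v : 'rV[K]_n, exists c, v = Defs.expand b c.
Proof.
move=> HK v; have [|g _ gK] := inj_card_bij (@expand_basis_inj n).
  by rewrite !card_mx HK card_bool -expnM mul1n mulnC.
by exists (g v); rewrite gK.
Qed.

Lemma expand_basis_xor n (c c' : 'M[bool]_(n, m)) :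
  Defs.expand b (xor_bmx c c') = Defs.expand b c + Defs.expand b c'.
Proof.
apply/rowP => i; rewrite !mxE -big_split /=; apply: eq_bigr => j _.
by rewrite mxE (natr_addb_pchar2 pchar2) mulrDl.
Qed.

Lemma expand_basis0 n : Defs.expand b (const_mx false) = 0 :> 'rV[K]_n.
Proof. by apply/rowP => i; rewrite !mxE big1 // => j _; rewrite mxE mul0r. Qed.
End SelfDualExpansion.

Section RootCodes.
Variable K : finFieldType.

Lemma rVpolyE n (v : 'rV[K]_n) : rVpoly v = \sum_(i < n) v 0 i *: 'X^i.
Proof.
rewrite {1}[v]row_sum_delta linear_sum.
by apply: eq_bigr => i _; rewrite linearZ; congr (_ *: _); exact: rVpoly_delta.
Qed.

Lemma size_rVpoly n (v : 'rV[K]_n) : (size (rVpoly v) <= n)%N.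
Proof. exact: size_poly. Qed.

Lemma horner_rVpoly_sum n (v : 'rV[K]_n) x : (rVpoly v).[x] = \sum_(i < n) v 0 i * x ^+ i.
Proof.
rewrite (horner_coef_wide _ (size_rVpoly v)).
by apply: eq_bigr => i _; rewrite coef_rVpoly_ord.
Qed.

Definition root_code n (rs : seq K) : {set 'rV[K]_n} :=
  [set v | \prod_(z <- rs) ('X - z%:P) %| rVpoly v].

Lemma root_codeP n (rs : seq K) (v : 'rV[K]_n) : uniq rs ->
  reflect {in rs, forall z, (rVpoly v).[z] = 0} (v \in root_code n rs).
Proof.
move=> rs_uniq; rewrite inE; apply: (iffP idP).
  by move=> /dvdpP [q ->] z zr; apply/rootP; rewrite rootM root_prod_XsubC zr orbT.
move=> Hv; have Hroots : all (root (rVpoly v)) rs by apply/allP => z /Hv /eqP.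
have [|q ->] := uniq_roots_prod_XsubC Hroots; first by rewrite uniq_rootsE.
exact: dvdp_mull.
Qed.

Lemma card_root_code n (rs : seq K) : (size rs <= n)%N ->
  #|root_code n rs| = (#|K| ^ (n - size rs))%N.
Proof.
move=> rs_n; set g := \prod_(z <- rs) ('X - z%:P); set d := size rs.
have size_g : size g = d.+1 by rewrite size_prod_XsubC.
have g_neq0 : g != 0 by rewrite -size_poly_gt0 size_g.
pose phi (q : 'rV[K]_(n - d)) : 'rV[K]_n := poly_rV (g * rVpoly q).
have phiK q : rVpoly (phi q) = g * rVpoly q.
  rewrite poly_rV_K //; apply: leq_trans (size_polyMleq _ _) _.
  by rewrite size_g addSn /= -leq_subRL // size_rVpoly.
have phi_inj : injective phi.
  by move=> q q' E; apply: (can_inj rVpolyK); apply: (mulfI g_neq0); rewrite -!phiK E.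
suff -> : root_code n rs = [set phi q | q : 'rV[K]_(n - d)].
  by rewrite card_imset // card_mx mul1n.
apply/setP => v; rewrite inE; apply/idP/imsetP => [/dvdpP [q Ev] | [q _ ->]]; last first.
  by rewrite phiK dvdp_mulr.
have size_q : (size q <= n - d)%N.
  have [->|q_neq0] := eqVneq q 0; first by rewrite size_poly0.
  have := size_rVpoly v; rewrite Ev size_mul // size_g addnS /=.
  by rewrite leq_subRL // addnC.
exists (poly_rV q) => //; apply: (can_inj rVpolyK).
by rewrite phiK poly_rV_K // mulrC -Ev.
Qed.

Lemma root_code_additive n rs : additive_code (root_code n rs).
Proof.
split; first by rewrite inE linear0 dvdp0.
by move=> u v /[!inE] Du Dv; rewrite linearD dvdp_add.
Qed.

Lemma root_codeZ n rs a (v : 'rV[K]_n) : v \in root_code n rs -> a *: v \in root_code n rs.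
Proof. by rewrite !inE linearZ /= -mul_polyC; apply: dvdp_mull. Qed.
End RootCodes.

Section ReedSolomon.
Variables (K : finFieldType) (n k : nat) (alpha : K).
Hypothesis alpha_prim : n.-primitive_root alpha.
Hypothesis k_lt_n : (k < n)%N.

Local Notation RS := (RScode n k alpha).

Lemma prim_pow_uniq (s : seq nat) : uniq s -> all (fun i => i < n)%N s ->
  uniq [seq alpha ^+ i | i <- s].
Proof.
move=> s_uniq /allP s_lt; rewrite map_inj_in_uniq // => i j /s_lt ? /s_lt ? /eqP.
by rewrite (eq_prim_root_expr alpha_prim) !modn_small // => /eqP.
Qed.

Lemma eq_prim_pow_ord (i j : 'I_n) : (alpha ^+ i == alpha ^+ j) = (i == j).
Proof. by rewrite (eq_prim_root_expr alpha_prim) !modn_small. Qed.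

Lemma prim_neq0 : alpha != 0.
Proof.
apply: contra_eq_neq (prim_expr_order alpha_prim) => ->.
by rewrite expr0n eqn0Ngt (prim_order_gt0 alpha_prim) eq_sym oner_eq0.
Qed.

Lemma sum_prim_pow e : (0 < e < n)%N -> \sum_(l < n) (alpha ^+ e) ^+ l = 0.
Proof.
move=> /andP [e_gt0 e_lt].
have ae_neq1 : alpha ^+ e - 1 != 0.
  rewrite subr_eq0 -(prim_order_dvd alpha_prim); apply: contraL e_lt => /(dvdn_leq e_gt0).
  by rewrite -ltnNge.
have /esym/eqP := subrX1 (alpha ^+ e) n.
by rewrite exprAC (prim_expr_order alpha_prim) expr1n subrr mulf_eq0 (negbTE ae_neq1) => /eqP.
Qed.

Definition RS_zeros := [seq alpha ^+ i | i <- index_iota 0 (n - k)].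
Definition RS_dual_zeros := [seq alpha ^+ t | t <- index_iota 1 k.+1].

Lemma RS_zeros_uniq : uniq RS_zeros.
Proof.
by apply: prim_pow_uniq; rewrite ?iota_uniq //; apply/allP => i; rewrite mem_index_iota; lia.
Qed.

Lemma RS_dual_zeros_uniq : uniq RS_dual_zeros.
Proof.
by apply: prim_pow_uniq; rewrite ?iota_uniq //; apply/allP => i; rewrite mem_index_iota; lia.
Qed.

Lemma RScodeE : RS = root_code n RS_zeros.
Proof. by apply/setP => v; rewrite !inE rVpolyE /RSgen /RS_zeros big_map big_mkord. Qed.

Lemma RScodeP (v : 'rV[K]_n) :
  reflect (forall i, (i < n - k)%N -> (rVpoly v).[alpha ^+ i] = 0) (v \in RS).
Proof.
rewrite RScodeE; apply: (iffP (root_codeP _ RS_zeros_uniq)) => Hv.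
  by move=> i lt_i; apply: Hv; apply: map_f; rewrite mem_index_iota.
by move=> z /mapP [i]; rewrite mem_index_iota => /andP [_ lt_i] ->; apply: Hv.
Qed.

Lemma card_RScode : #|RS| = (#|K| ^ k)%N.
Proof.
rewrite RScodeE card_root_code size_map size_iota subn0 ?leq_subr //.
by rewrite subKn // ltnW.
Qed.

Definition eval_row (P : {poly K}) : 'rV[K]_n := \row_(l < n) P.[alpha ^+ l].

Lemma dot_eval_row (P : {poly K}) (x : 'I_n -> K) : (size P <= k.+1)%N ->
  \sum_(l < n) eval_row P 0 l * x l =
  \sum_(s < k.+1) P`_s * \sum_(l < n) x l * (alpha ^+ s) ^+ l.
Proof.
move=> size_P.
under eq_bigr => l _ do rewrite mxE (horner_coef_wide _ size_P) mulr_suml.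
rewrite exchange_big /=; apply: eq_bigr => s _; rewrite mulr_sumr.
by apply: eq_bigr => l _; rewrite exprAC; ring.
Qed.

Lemma eval_row_RScode (P : {poly K}) : P`_0 = 0 -> (size P <= k.+1)%N -> eval_row P \in RS.
Proof.
move=> P0 size_P; apply/RScodeP => i lt_i; rewrite horner_rVpoly_sum.
rewrite (dot_eval_row (fun l => (alpha ^+ i) ^+ l)) // big1 // => s _.
case: (posnP s) => [s0|s_gt0]; first by rewrite s0 P0 mul0r.
under eq_bigr => l _ do rewrite -exprMn -exprD.
by rewrite sum_prim_pow ?mulr0 // addn_gt0 s_gt0 orbT /=; have := ltn_ord s; lia.
Qed.

Lemma eval_row_inj (P Q : {poly K}) : (size P <= n)%N -> (size Q <= n)%N ->
  eval_row P = eval_row Q -> P = Q.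
Proof.
move=> size_P size_Q E; apply/eqP; rewrite -subr_eq0; apply: contraT => D_neq0.
pose pts := [seq alpha ^+ l | l <- index_iota 0 n].
have pts_roots : all (root (P - Q)) pts.
  apply/allP => z /mapP [l]; rewrite mem_index_iota => /andP [_ lt_l] ->.
  have := congr1 (fun v : 'rV[K]_n => v 0 (Ordinal lt_l)) E.
  by rewrite !mxE /root hornerD hornerN => ->; rewrite subrr.
have pts_uniq : uniq pts.
  by apply: prim_pow_uniq; rewrite ?iota_uniq //; apply/allP => l; rewrite mem_index_iota.
have := max_poly_roots D_neq0 pts_roots pts_uniq.
rewrite size_map size_iota subn0 ltnNge (leq_trans (size_polyD _ _)) //.
by rewrite size_polyN geq_max size_P size_Q.
Qed.

Lemma size_XrVpoly (p : 'rV[K]_k) : (size ('X * rVpoly p)%R <= k.+1)%N.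
Proof.
apply: leq_trans (size_polyMleq _ _) _.
by rewrite size_polyX /= ltnS size_rVpoly.
Qed.

Lemma RScode_eval : RS = [set eval_row ('X * rVpoly p) | p : 'rV[K]_k].
Proof.
apply/eqP; rewrite eq_sym eqEcard; apply/andP; split.
  apply/fintype.subsetP => v /imsetP [p _ ->].
  by apply: eval_row_RScode; rewrite ?coefXM ?size_XrVpoly.
rewrite card_RScode card_imset ?card_mx ?mul1n // => p q /eval_row_inj E.
apply: (can_inj rVpolyK); apply: (mulfI (negbT (polyX_eq0 K))).
by apply: E; apply: leq_trans (size_XrVpoly _) _.
Qed.

Lemma dual_RScodeE : std_dual RS = root_code n RS_dual_zeros.
Proof.
apply/setP => w; rewrite inE; apply/forall_inP/(root_codeP _ RS_dual_zeros_uniq) => Hw.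
  move=> z /mapP [t]; rewrite mem_index_iota => /andP [t_gt0 t_le] ->.
  have Xt0 : ('X^t : {poly K})`_0 = 0 by rewrite coefXn eq_sym eqn0Ngt t_gt0.
  have size_Xt : (size ('X^t : {poly K}) <= k.+1)%N by rewrite size_polyXn.
  have /eqP := Hw _ (eval_row_RScode Xt0 size_Xt).
  under eq_bigr => l _ do rewrite mxE hornerXn -exprM mulnC exprM mulrC.
  by rewrite -horner_rVpoly_sum.
move=> v; rewrite RScode_eval => /imsetP [p _ ->].
rewrite (dot_eval_row (fun l => w 0 l)) ?size_XrVpoly // big1 // => s _.
case: (posnP s) => [s0|s_gt0]; first by rewrite s0 coefXM eqxx mul0r.
rewrite -horner_rVpoly_sum Hw ?mulr0 //.
by apply: map_f; rewrite mem_index_iota s_gt0 (ltn_ord s).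
Qed.

Lemma card_dual_RScode : #|std_dual RS| = (#|K| ^ (n - k))%N.
Proof.
rewrite dual_RScodeE card_root_code size_map size_iota ?subSS ?subn0 //.
exact: ltnW.
Qed.

Lemma RScode_self_orthogonal : (2 * k < n)%N -> RS \subset std_dual RS.
Proof.
move=> k2_lt; rewrite dual_RScodeE; apply/fintype.subsetP => v /RScodeP Hv.
apply/(root_codeP _ RS_dual_zeros_uniq) => z /mapP [t]; rewrite mem_index_iota => t_range ->.
by apply: Hv; lia.
Qed.

(* A nonzero dual codeword [w] with at most [k] nonzero entries would be orthogonal
   to the evaluation of [X * prod_(l in supp w, l <> l0) (X - alpha^l)], a codeword. *)
Lemma dual_RScode_support (w : 'rV[K]_n) : w \in std_dual RS -> w != 0 ->
  (k < #|[set l | (w 0 l != 0)%R]|)%N.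
Proof.
move=> w_dual w_neq0; set S := [set l | w 0 l != 0].
have [l0 wl0] : exists l0 : 'I_n, w 0 l0 != 0.
  apply/existsP; apply: contra_neqT w_neq0 => /existsPn Hw.
  by apply/rowP => l; rewrite mxE; apply/eqP/negbNE/Hw.
rewrite ltnNge; apply/negP => S_le.
pose Q := \prod_(l <- enum (S :\ l0)) ('X - (alpha ^+ l)%:P).
have XQ0 : ('X * Q)`_0 = 0 by rewrite coefXM.
have size_XQ : (size ('X * Q)%R <= k.+1)%N.
  rewrite mulrC size_mulX ?monic_neq0 ?monic_prod_XsubC // size_prod_XsubC -cardE.
  by move: S_le; rewrite (cardsD1 l0) inE wl0 add1n.
move: w_dual; rewrite inE => /forall_inP /(_ _ (eval_row_RScode XQ0 size_XQ)) /eqP.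
rewrite (bigD1 l0) //= big1 => [|l l_neq]; last first.
  rewrite mxE hornerM horner_prod.
  have [l_S | l_nS] := boolP (l \in S :\ l0).
    by rewrite (big_rem l) ?mem_enum //= hornerXsubC subrr !(mul0r, mulr0).
  by move: l_nS; rewrite !inE l_neq /= negbK => /eqP ->; rewrite mulr0.
rewrite addr0; apply/eqP; rewrite mxE hornerM hornerX !mulf_neq0 ?expf_neq0 ?prim_neq0 //.
rewrite horner_prod prodf_seq_neq0; apply/allP => l; rewrite mem_enum in_setD1 => /andP [l_neq _].
by rewrite hornerXsubC subr_eq0 eq_prim_pow_ord eq_sym.
Qed.
End ReedSolomon.

Section OmegaCode.
Variables (F : finFieldType) (omega : F).
Hypothesis HF : #|F| = 4%N.
Hypothesis Homega : omega ^+ 2 = omega + 1.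
Variables (K : finFieldType) (m : nat) (b : 'I_m -> K).
Hypothesis Hb : self_dual_basis b.
Hypothesis HK : #|K| = (2 ^ m)%N.
Variable n : nat.

Let pchar2F : 2 \in [pchar F] := pchar2_F4 HF.
Let pchar2K : 2 \in [pchar K] := card_finPcharP HK isT.

Lemma omega_codeP (D : {set 'rV[K]_n}) M :
  reflect (exists a c, [/\ Defs.expand b a \in D, Defs.expand b c \in D & M = omega_mx omega a c])
    (M \in omega_code omega b D).
Proof.
rewrite inE; apply: (iffP existsP).
  by move=> [a /existsP [c /and3P [Da Dc /eqP ->]]]; exists a, c.
by move=> [a [c [Da Dc ->]]]; exists a; apply/existsP; exists c; rewrite Da Dc eqxx.
Qed.

Lemma card_expand_preim (D : {set 'rV[K]_n}) :
  #|[set c : 'M[bool]_(n, m) | Defs.expand b c \in D]| = #|D|.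
Proof.
set B := [set c | Defs.expand b c \in D].
have ED : [set Defs.expand b c | c in B] = D.
  apply/setP => v; apply/imsetP/idP => [[c /[!inE] Dc ->] // | Dv].
  by have [c Ev] := expand_basis_surj pchar2K Hb HK v; exists c; rewrite // inE -Ev.
by rewrite -[in RHS]ED card_imset //; apply: expand_basis_inj.
Qed.

Lemma card_omega_code (D : {set 'rV[K]_n}) : #|omega_code omega b D| = (#|D| * #|D|)%N.
Proof.
set B := [set c : 'M[bool]_(n, m) | Defs.expand b c \in D].
have -> : omega_code omega b D = [set omega_mx omega p.1 p.2 | p in finset.setX B B].
  apply/setP => M; apply/omega_codeP/imsetP => [[a [c [Da Dc ->]]] | [[a c]]].
    by exists (a, c); rewrite // finset.in_setX !inE Da Dc.
  by rewrite finset.in_setX !inE /= => /andP [Da Dc] ->; exists a, c.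
rewrite card_in_imset ?cardsX ?card_expand_preim // => -[a c] [a' c'] _ _ /=.
by move=> /(omega_mx_inj HF Homega) [-> ->].
Qed.

Lemma omega_code_additive (D : {set 'rV[K]_n}) :
  additive_code D -> additive_code (omega_code omega b D).
Proof.
move=> [D0 DD]; split.
  apply/omega_codeP; exists (const_mx false), (const_mx false).
  by rewrite omega_mx0 ?expand_basis0.
move=> _ _ /omega_codeP [a [c [Da Dc ->]]] /omega_codeP [a' [c' [Da' Dc' ->]]].
apply/omega_codeP; exists (xor_bmx a a'), (xor_bmx c c').
by rewrite (omega_mxD omega HF) !(expand_basis_xor _ pchar2K) !DD.
Qed.

Lemma omega_codeS (D D' : {set 'rV[K]_n}) : D \subset D' ->
  omega_code omega b D \subset omega_code omega b D'.
Proof.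
move=> /fintype.subsetP DD'; apply/fintype.subsetP => M /omega_codeP [a [c [Da Dc ->]]].
by apply/omega_codeP; exists a, c; rewrite !DD'.
Qed.

(* Applying the absolute trace turns the standard dot product of expansions into the
   parity of the binary dot product; nondegeneracy of the trace gives the converse. *)
Lemma expand_std_dualP (D : {set 'rV[K]_n}) (d : 'M[bool]_(n, m)) : (0 < m)%N ->
  (forall a (v : 'rV[K]_n), v \in D -> a *: v \in D) ->
  reflect (forall c, Defs.expand b c \in D -> ~~ odd (dot_bmx c d))
          (Defs.expand b d \in std_dual D).
Proof.
move=> m_gt0 DZ; rewrite inE; apply: (iffP forall_inP) => [Hd c /Hd /eqP | Hd v Dv].
  move/(congr1 (abstr m)); rewrite (abstr_dot_expand pchar2K Hb) abstr0 => /eqP.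
  by rewrite (natr_eq0_pchar2 pchar2K).
apply/eqP/(abstr_nondegenerate Hb) => // l.
have [c Ec] := expand_basis_surj pchar2K Hb HK (l *: v).
have Dc : Defs.expand b c \in D by rewrite -Ec DZ.
have := Hd c Dc; rewrite -(natr_eq0_pchar2 pchar2K) -(abstr_dot_expand pchar2K Hb) -Ec.
move=> /eqP E; rewrite -[RHS]E mulr_sumr; congr abstr.
by apply: eq_bigr => i _; rewrite !mxE mulrA.
Qed.

Lemma tdual_omega_code (D : {set 'rV[K]_n}) : (0 < m)%N -> 0 \in D ->
  (forall a (v : 'rV[K]_n), v \in D -> a *: v \in D) ->
  tdual (omega_code omega b D) = omega_code omega b (std_dual D).
Proof.
move=> m_gt0 D0 DZ; have falseD : Defs.expand b (const_mx false) \in D by rewrite expand_basis0.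
have inD c c' : Defs.expand b c \in D -> Defs.expand b c' \in D ->
    omega_mx omega c c' \in omega_code omega b D.
  by move=> Dc Dc'; apply/omega_codeP; exists c, c'.
apply/setP => M; have [a [e ->]] := omega_mx_surj HF Homega M.
rewrite inE; apply/forall_inP/omega_codeP => [Hd | [a' [e' [Da' De' Eae]]]]; last first.
  move: Eae Da' De' => /(omega_mx_inj HF Homega) [<- <-].
  move=> /(expand_std_dualP _ m_gt0 DZ) Ha /(expand_std_dualP _ m_gt0 DZ) He.
  move=> _ /omega_codeP [c [d [Dc Dd ->]]].
  rewrite (tip_omega_mx HF Homega) (natr_eq0_pchar2 pchar2F) oddD.
  by rewrite (negbTE (He _ Dc)) (negbTE (Ha _ Dd)).
exists a, e; split => //; apply/(expand_std_dualP _ m_gt0 DZ) => c Dc.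
  have := Hd _ (inD _ _ falseD Dc).
  by rewrite (tip_omega_mx HF Homega) dot_bmx0l add0n (natr_eq0_pchar2 pchar2F).
have := Hd _ (inD _ _ Dc falseD).
by rewrite (tip_omega_mx HF Homega) dot_bmx0l addn0 (natr_eq0_pchar2 pchar2F).
Qed.

(* [w] is one of the two binary components of [M]. *)
Lemma omega_code_support (D : {set 'rV[K]_n}) (M : 'M[F]_(n, m)) :
  M \in omega_code omega b D -> M != 0 ->
  exists2 w, w \in D :\ 0 & [set l | w 0 l != 0] \subset [set i | row i M != 0].
Proof.
move=> /omega_codeP [a [e [Da De EM]]] M_neq0.
have row_eq0 l j : row l M = 0 -> a l j = false /\ e l j = false.
  move=> /(congr1 (fun v : 'rV[F]_m => v 0 j)); rewrite EM !mxE.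
  by rewrite -(F4_of_bits00 omega) => /(F4_of_bits_inj HF Homega).
have expand_row_eq0 (c : 'M[bool]_(n, m)) l :
    (forall j, c l j = false) -> Defs.expand b c 0 l = 0.
  by move=> Hc; rewrite mxE big1 // => j _; rewrite Hc mul0r.
have [Ea|a_neq0] := eqVneq (Defs.expand b a) 0; last first.
  exists (Defs.expand b a); first by rewrite !inE a_neq0.
  apply/fintype.subsetP => l; rewrite !inE; apply: contraNN => /eqP Ml0.
  by rewrite expand_row_eq0 // => j; have [] := row_eq0 l j Ml0.
have [Ee|e_neq0] := eqVneq (Defs.expand b e) 0; last first.
  exists (Defs.expand b e); first by rewrite !inE e_neq0.
  apply/fintype.subsetP => l; rewrite !inE; apply: contraNN => /eqP Ml0.
  by rewrite expand_row_eq0 // => j; have [] := row_eq0 l j Ml0.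
case/eqP: M_neq0; rewrite EM.
have -> : a = const_mx false by apply: (expand_basis_inj pchar2K Hb); rewrite Ea expand_basis0.
have -> : e = const_mx false by apply: (expand_basis_inj pchar2K Hb); rewrite Ee expand_basis0.
exact: omega_mx0.
Qed.
End OmegaCode.

Lemma subr_eq_swap (V : zmodType) (a b a' b' : V) : a + b = a' + b' -> a - a' = b' - b.
Proof. by move=> E; rewrite -(addrK b a) E addrAC [a' + b']addrC addrK. Qed.

Section RhoCode.
Variables (F : finFieldType) (m n2 : nat) (C2 : {set 'rV[F]_n2}) (r : 'rV[F]_m -> 'rV[F]_n2).
Hypothesis pchar2 : 2 \in [pchar F].
Hypothesis C2_add : additive_code C2.
Hypothesis C2_so : C2 \subset tdual C2.
Hypothesis Hr : symplectic_rep C2 r.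

Lemma C2_0 : 0 \in C2. Proof. exact: C2_add.1. Qed.

Lemma C2D x y : x \in C2 -> y \in C2 -> x + y \in C2. Proof. exact: C2_add.2. Qed.

Lemma C2B x y : x \in C2 -> y \in C2 -> x - y \in C2.
Proof. by rewrite (submx_pchar2 pchar2); apply: C2D. Qed.

Lemma rep0_in_C2 : r 0 \in C2.
Proof.
have [_ Hadd _ _ _] := Hr; have := Hadd 0 0.
by rewrite addr0 subrr sub0r (oppmx_pchar2 pchar2).
Qed.

Lemma rep_in_C2_eq0 u : r u \in C2 -> u = 0.
Proof. by have [_ _ Hinj _ _] := Hr; move=> ru; apply: Hinj; apply: C2B ru rep0_in_C2. Qed.

Variable n : nat.

Definition rho_mx (V : 'M[F]_(n, m)) : 'M[F]_(n, n2) := \matrix_(i < n) r (row i V).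

Definition rowwise_code : {set 'M[F]_(n, n2)} := [set W | [forall i, row i W \in C2]].

Lemma row_rho_mx i V : row i (rho_mx V) = r (row i V).
Proof. exact: rowK. Qed.

Lemma rowwise_code0 : 0 \in rowwise_code.
Proof. by rewrite inE; apply/forallP => i; rewrite row0 C2_0. Qed.

Lemma rho_codeE (D : {set 'M[F]_(n, m)}) :
  rho_code C2 r D = [set rho_mx p.1 + p.2 | p in finset.setX D rowwise_code].
Proof.
apply/setP => W; rewrite inE; apply/exists_inP/imsetP => [[V DV /forallP HW] | [[V c]]].
  exists (V, W - rho_mx V); last by rewrite /= addrC subrK.
  by rewrite finset.in_setX DV inE; apply/forallP => i; rewrite linearB /= row_rho_mx HW.
rewrite finset.in_setX inE /= => /andP [DV /forallP Hc] ->.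
by exists V => //; apply/forallP => i; rewrite linearD /= row_rho_mx addrAC subrr add0r Hc.
Qed.

Lemma rho_codeS (D D' : {set 'M[F]_(n, m)}) : D \subset D' ->
  rho_code C2 r D \subset rho_code C2 r D'.
Proof.
move=> /fintype.subsetP DD'; apply/fintype.subsetP => W /[!inE] /exists_inP [V /DD' DV HW].
by apply/exists_inP; exists V.
Qed.

Lemma rho_param_inj (D : {set 'M[F]_(n, m)}) :
  {in finset.setX D rowwise_code &,
    injective (fun p : 'M[F]_(n, m) * 'M[F]_(n, n2) => rho_mx p.1 + p.2)}.
Proof.
move=> [V c] [V' c']; rewrite !finset.in_setX !inE /=.
move=> /andP [_ /forallP Hc] /andP [_ /forallP Hc'] E.
have EV : V = V'.
  apply/row_matrixP => i; have [_ _ Hinj _ _] := Hr; apply: Hinj.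
  have := congr1 (row i) E; rewrite !linearD /= !row_rho_mx => /subr_eq_swap ->.
  exact: C2B.
by move: E; rewrite EV => /addrI ->.
Qed.

Lemma card_rowwise_code : #|rowwise_code| = (#|C2| ^ n)%N.
Proof.
have -> : rowwise_code =
    [set \matrix_(i < n) f i | f : {ffun 'I_n -> 'rV[F]_n2} in ffun_on (mem C2)].
  apply/setP => W; rewrite inE; apply/forallP/imsetP => [HW | [f /ffun_onP Hf ->] i].
    exists [ffun i => row i W]; first by apply/ffun_onP => i; rewrite ffunE HW.
    by apply/row_matrixP => i; rewrite rowK ffunE.
  by rewrite rowK Hf.
rewrite card_imset ?card_ffun_on ?card_ord // => f f' E.
by apply/ffunP => i; have := congr1 (row i) E; rewrite !rowK.
Qed.

Lemma card_rho_code (D : {set 'M[F]_(n, m)}) : #|rho_code C2 r D| = (#|D| * #|C2| ^ n)%N.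
Proof.
rewrite rho_codeE card_in_imset ?cardsX ?card_rowwise_code //.
exact: rho_param_inj.
Qed.

Lemma rho_code_additive (D : {set 'M[F]_(n, m)}) :
  additive_code D -> additive_code (rho_code C2 r D).
Proof.
move=> [D0 DD]; split.
  rewrite inE; apply/exists_inP; exists 0 => //; apply/forallP => i.
  by rewrite !row0; apply: C2B C2_0 rep0_in_C2.
move=> W W' /[!inE] /exists_inP [V DV /forallP HW] /exists_inP [V' DV' /forallP HW'].
apply/exists_inP; exists (V + V'); first exact: DD.
apply/forallP => i; have [_ Hadd _ _ _] := Hr.
have -> : row i (W + W') - r (row i (V + V')) =
    (row i W - r (row i V)) + (row i W' - r (row i V')) -
    (r (row i V + row i V') - r (row i V) - r (row i V')).
  by rewrite !linearD /=; apply/rowP => j; rewrite !mxE; ring.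
by apply: C2B; [apply: C2D|].
Qed.
(* [rho] is symplectic, and words of [C2] are orthogonal to [C2^perp]. *)
Lemma tip_rho_mx V V' c c' : c \in rowwise_code -> c' \in rowwise_code ->
  tip (rho_mx V + c) (rho_mx V' + c') = tip V V'.
Proof.
rewrite !inE => /forallP Hc /forallP Hc'.
rewrite tip_sum_row (tip_sum_row V); apply: eq_bigr => i _.
rewrite !linearD /= !row_rho_mx !(tipDl pchar2) !(tipDr pchar2).
have [Hdual _ _ _ Hsymp] := Hr.
have dual_C2 x y : x \in C2 -> y \in tdual C2 -> tip x y = 0.
  by move=> xC /[!inE] /forall_inP /(_ _ xC) /eqP.
rewrite Hsymp (tipC (r _)) !dual_C2 ?Hdual ?(fintype.subsetP C2_so) //.
by rewrite !addr0.
Qed.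

Lemma rho_mx_surj W : (forall i, row i W \in tdual C2) ->
  exists2 V, W - rho_mx V \in rowwise_code & W = rho_mx V + (W - rho_mx V).
Proof.
move=> HW; have [_ _ _ Hsurj _] := Hr.
pose V : 'M[F]_(n, m) := \matrix_(i < n) odflt 0 [pick u | row i W - r u \in C2].
exists V; last by rewrite addrC subrK.
rewrite inE; apply/forallP => i; rewrite linearB /= row_rho_mx rowK.
case: pickP => [u //|none]; have [u Wu] := Hsurj _ (HW i).
by rewrite none in Wu.
Qed.

Lemma tdual_rho_code (D Dp : {set 'M[F]_(n, m)}) : 0 \in D -> tdual D = Dp ->
  tdual (rho_code C2 r D) = rho_code C2 r Dp.
Proof.
move=> D0 <-; apply/setP => W; apply/idP/idP; last first.
  rewrite rho_codeE => /imsetP [[V c]]; rewrite finset.in_setX /= => /andP [DpV Rc] ->.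
  rewrite inE; apply/forall_inP => U; rewrite rho_codeE => /imsetP [[V' c']].
  rewrite finset.in_setX /= => /andP [DV' Rc'] ->.
  by rewrite tip_rho_mx //; move: DpV; rewrite inE => /forall_inP; apply.
rewrite inE => /forall_inP HW.
have inrho V c : V \in D -> c \in rowwise_code -> rho_mx V + c \in rho_code C2 r D.
  by move=> DV Rc; rewrite rho_codeE; apply/imsetP; exists (V, c); rewrite // finset.in_setX DV.
have tipW0 c : c \in rowwise_code -> tip c W = 0.
  move=> Rc; have /eqP := HW _ (inrho 0 c D0 Rc).
  have /eqP := HW _ (inrho 0 0 D0 rowwise_code0).
  by rewrite !addr0 (tipDl pchar2) => ->; rewrite add0r.
have rowsW i : row i W \in tdual C2.
  rewrite inE; apply/forall_inP => x xC; apply/eqP.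
  pose e : 'M[F]_(n, n2) := \matrix_(i' < n) (if i' == i then x else 0).
  have Re : e \in rowwise_code.
    by rewrite inE; apply/forallP => i'; rewrite rowK; case: eqP => _; rewrite ?C2_0.
  rewrite -(tipW0 e Re) [RHS]tip_sum_row (bigD1 i) //= big1 => [|i' /negbTE ne].
    by rewrite rowK eqxx addr0.
  by rewrite rowK ne tip0l.
have [V Wc EW] := rho_mx_surj rowsW.
rewrite rho_codeE; apply/imsetP; exists (V, W - rho_mx V) => //.
rewrite finset.in_setX Wc andbT inE; apply/forall_inP => V' DV'.
by rewrite -(tip_rho_mx _ _ rowwise_code0 Wc) -EW; apply: HW; apply: inrho; rewrite ?rowwise_code0.
Qed.

Lemma rho_code_stabilizer (D Dp : {set 'M[F]_(n, m)}) :
  additive_code D -> tdual D = Dp -> D \subset Dp ->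
  [/\ additive_code (rho_code C2 r D), rho_code C2 r D \subset tdual (rho_code C2 r D)
    & tdual (rho_code C2 r D) = rho_code C2 r Dp].
Proof.
move=> D_add tD DDp; have tQ := tdual_rho_code D_add.1 tD.
by split; [exact: rho_code_additive | rewrite tQ rho_codeS | exact: tQ].
Qed.

(* A nonzero block of [V] contributes a block of [C2^perp \ C2], of weight at least [d2]. *)
Lemma rho_code_wt (D D0 : {set 'M[F]_(n, m)}) d2 W :
  (forall v, v \in tdual C2 :\: C2 -> (d2 <= wt v)%N) -> 0 \in D0 ->
  W \in rho_code C2 r D :\: rho_code C2 r D0 ->
  exists2 V, V \in D :\ 0 & (d2 * #|[set i | (row i V != 0)%R]| <= wt W)%N.
Proof.
move=> HC2 D00; rewrite finset.in_setD => /andP [WD0]; rewrite rho_codeE.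
move=> /imsetP [[V c]]; rewrite finset.in_setX /= => /andP [DV Rc] EW.
have V_neq0 : V != 0.
  apply: contraNneq WD0 => V0; rewrite rho_codeE; apply/imsetP; exists (V, c) => //.
  by rewrite finset.in_setX V0 D00 Rc.
exists V; first by rewrite !inE V_neq0.
rewrite wt_sum_row (bigID (mem [set i | row i V != 0])) /=; apply: leq_trans (leq_addr _ _).
rewrite mulnC -sum_nat_const; apply: leq_sum => i; rewrite inE => Vi.
have [Hdual _ _ _ _] := Hr; move: Rc; rewrite inE => /forallP Rc.
apply: HC2; rewrite finset.in_setD EW linearD /= row_rho_mx; apply/andP; split.
  move: Vi; apply: contraNN => WC; apply/eqP/rep_in_C2_eq0.
  by rewrite -(addrK (row i c) (r (row i V))); apply: C2B.
by apply: (tdualD pchar2); [apply: Hdual | apply: (fintype.subsetP C2_so)].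
Qed.
End RhoCode.

Lemma qmindist_ge (F : finFieldType) a c (C Cp : {set 'M[F]_(a, c)}) d :
  ~~ (Cp \subset C) -> (forall v, v \in Cp :\: C -> (d <= wt v)%N) -> (d <= qmindist C Cp)%N.
Proof.
move=> CpC Hd; have [v0 v0C] : exists v0, v0 \in Cp :\: C.
  by apply/finset.set0Pn; rewrite finset.setD_eq0.
have d_lt : (d < (a * c).+1)%N by rewrite ltnS (leq_trans (Hd _ v0C)) ?wt_le.
pose F_ (i : 'I_(a * c).+1) := nat_of_ord i.
apply: leq_trans (leq_bigmax_cond (F := F_) (Ordinal d_lt) _) => //.
by apply/forall_inP => v /Hd.
Qed.

Lemma pow2_factor a m n2 : (a * 2 ^ m = 2 ^ n2)%N -> (m <= n2)%N /\ a = (2 ^ (n2 - m))%N.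
Proof.
move=> E; have a_gt0 : (0 < a)%N.
  by case: a E => [|a] //; rewrite mul0n => /esym/eqP; rewrite expn_eq0.
have m_le : (m <= n2)%N by rewrite -(@leq_exp2l 2) // -E leq_pmull.
by split=> //; apply/eqP; rewrite -(eqn_pmul2r (expn_gt0 2 m)) E -expnD subnK.
Qed.

Lemma double_lt_pow2_pred m k : (0 < m)%N -> (k <= 2 ^ m.-1 - 1)%N -> (2 * k < 2 ^ m - 1)%N.
Proof.
move=> m_gt0 k_le; have e : (2 ^ m = 2 * 2 ^ m.-1)%N by rewrite -expnS prednK.
have : (0 < 2 ^ m.-1)%N by rewrite expn_gt0.
rewrite e; lia.
Qed.

Lemma stabilizer_exponents m n n2 k : (0 < m)%N -> (m <= n2)%N -> (2 * k < n)%N ->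
  [/\ (m * k + m * k + (n2 - m) * n = n * n2 - m * (n - 2 * k))%N,
      (m * (n - k) + m * (n - k) + (n2 - m) * n = n * n2 + m * (n - 2 * k))%N &
      (n * n2 - m * (n - 2 * k) < n * n2 + m * (n - 2 * k))%N].
Proof. by move=> m_gt0 m_le k2_lt; split; nia. Qed.

Lemma code_rate (R : numFieldType) m n n2 k : (0 < n)%N -> (0 < n2)%N -> (2 * k <= n)%N ->
  (m * (n - 2 * k))%:R / (n * n2)%:R = m%:R / n2%:R * (1 - 2 * (k%:R / n%:R)) :> R.
Proof.
move=> n_gt0 n2_gt0 k2_le; rewrite natrM natrB // !natrM.
by field; rewrite !pnatr_eq0 -!lt0n n_gt0 n2_gt0.
Qed.

Lemma relative_distance_ge (R : numFieldType) n n2 k d2 D : (0 < n)%N -> (0 < n2)%N ->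
  (d2 * (k + 1) <= D)%N -> d2%:R / n2%:R * (k%:R / n%:R) <= D%:R / (n * n2)%:R :> R.
Proof.
move=> n_gt0 n2_gt0 le_D.
have -> : d2%:R / n2%:R * (k%:R / n%:R) = (d2 * k)%:R / (n * n2)%:R :> R.
  by rewrite !natrM; field; rewrite !pnatr_eq0 -!lt0n n_gt0 n2_gt0.
rewrite ler_pM2r ?invr_gt0 ?ltr0n ?muln_gt0 ?n_gt0 ?n2_gt0 // ler_nat.
by apply: leq_trans le_D; rewrite leq_mul2l addn1 leqnSn orbT.
Qed.

Section Concatenation.
Variables (F : finFieldType) (omega : F) (K : finFieldType) (m n k : nat) (alpha : K).
Variable b : 'I_m -> K.
Hypothesis HF : #|F| = 4%N.
Hypothesis Homega : omega ^+ 2 = omega + 1.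
Hypothesis HK : #|K| = (2 ^ m)%N.
Hypothesis m_gt0 : (0 < m)%N.
Hypothesis alpha_prim : n.-primitive_root alpha.
Hypothesis Hb : self_dual_basis b.
Hypothesis k2_lt : (2 * k < n)%N.

Local Notation C1 := (omega_code omega b (RScode n k alpha)).
Local Notation C1p := (omega_code omega b (std_dual (RScode n k alpha))).

Let k_lt : (k < n)%N. Proof. lia. Qed.

Lemma omega_RScode_dual : [/\ additive_code C1, tdual C1 = C1p & C1 \subset C1p].
Proof.
have RS_add : additive_code (RScode n k alpha) by rewrite RScodeE; apply: root_code_additive.
have RS0 : 0 \in RScode n k alpha := RS_add.1.
have RSZ a v : v \in RScode n k alpha -> a *: v \in RScode n k alpha.
  by rewrite RScodeE; apply: root_codeZ.
split; [by apply: omega_code_additive | by apply: tdual_omega_code |].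
by apply/omega_codeS/RScode_self_orthogonal.
Qed.

Lemma card_omega_RScode :
  #|C1| = (2 ^ (m * k + m * k))%N /\ #|C1p| = (2 ^ (m * (n - k) + m * (n - k)))%N.
Proof. by rewrite !card_omega_code // card_RScode // card_dual_RScode // HK -!expnM -!expnD. Qed.

Variables (n2 d2 : nat) (C2 : {set 'rV[F]_n2}) (r : 'rV[F]_m -> 'rV[F]_n2).
Hypothesis C2_add : additive_code C2.
Hypothesis C2_so : C2 \subset tdual C2.
Hypothesis C2_dist : forall v, v \in tdual C2 :\: C2 -> (d2 <= wt v)%N.
Hypothesis Hr : symplectic_rep C2 r.

Lemma concatenated_code_wt v :
  v \in rho_code C2 r C1p :\: rho_code C2 r C1 -> (d2 * (k + 1) <= wt v)%N.
Proof.
have [C1_add _ _] := omega_RScode_dual.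
case/(rho_code_wt (pchar2_F4 HF) C2_add C2_so Hr C2_dist C1_add.1) => V.
rewrite finset.in_setD1 => /andP [V_neq0 C1pV] wtV.
have [w] := omega_code_support HF Homega Hb HK C1pV V_neq0.
rewrite finset.in_setD1 => /andP [w_neq0 w_dual] supp_w.
apply: leq_trans wtV; rewrite leq_mul2l addn1; apply/orP; right.
exact: leq_trans (dual_RScode_support alpha_prim k_lt w_dual w_neq0) (subset_leq_card supp_w).
Qed.
End Concatenation.

Theorem lemma3
  (F : finFieldType) (omega : F)
  (HF : #|F| = 4%N) (Homega : omega ^+ 2 = omega + 1)
  (K : finFieldType) (m k : nat) (alpha : K) (b : 'I_m -> K)
  (Hm : (2 <= m)%N) (HK : #|K| = (2 ^ m)%N)
  (Hk1 : (1 <= k)%N) (Hk2 : (k <= 2 ^ m.-1 - 1)%N)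
  (Halpha : (2 ^ m - 1)%N.-primitive_root alpha)
  (Hb : self_dual_basis b)
  (n2 d2 : nat) (C2 : {set 'rV[F]_n2}) (r : 'rV[F]_m -> 'rV[F]_n2)
  (HC2add : additive_code C2) (HC2so : C2 \subset tdual C2)
  (HC2card : (#|C2| * 2 ^ m = 2 ^ n2)%N)
  (HC2dist : forall v, v \in tdual C2 :\: C2 -> (d2 <= wt v)%N)
  (Hr : symplectic_rep C2 r) :
  let n := (2 ^ m - 1)%N in
  let CRS := RScode n k alpha in
  let C1 := omega_code omega b CRS in
  let C1p := omega_code omega b (std_dual CRS) in
  let Q := rho_code C2 r C1 in
  let Qp := rho_code C2 r C1p in
  additive_code Q /\ Q \subset tdual Q /\ tdual Q = Qp /\
  #|Q| = (2 ^ (n * n2 - m * (n - 2 * k)))%N /\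
  #|Qp| = (2 ^ (n * n2 + m * (n - 2 * k)))%N /\
  (forall v, v \in Qp :\: Q -> (d2 * (k + 1) <= wt v)%N) /\
  (forall R : realType,
        let rr : R := m%:R / n2%:R in
        let rr' : R := k%:R / n%:R in
        let delta : R := (qmindist Q Qp)%:R / (n * n2)%:R in
        [/\ (m * (n - 2 * k))%:R / (n * n2)%:R = rr * (1 - 2 * rr'),
            delta >= d2%:R / n2%:R * rr' &
            forall h : R, 0 < h -> h <= 3 / 4 -> H4 h = (1 - rr) / 2 ->
              d2%:R / n2%:R >= h -> delta >= rr' * h]).
Proof.
move=> n CRS C1 C1p Q Qp.
have m_gt0 : (0 < m)%N by apply: leq_trans Hm.
have k2_lt : (2 * k < n)%N by apply: double_lt_pow2_pred.
have [C1_add tC1 C1_sub] := omega_RScode_dual HF Homega HK m_gt0 Halpha Hb k2_lt.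
have [cC1 cC1p] := card_omega_RScode HF Homega HK m_gt0 Halpha Hb k2_lt.
have pchar2F := pchar2_F4 HF.
have [Q_add Q_so tQ] := rho_code_stabilizer pchar2F HC2add HC2so Hr C1_add tC1 C1_sub.
have [m_le cC2] := pow2_factor HC2card.
have [eQ eQp ltQ] := stabilizer_exponents m_gt0 m_le k2_lt.
have cQ : #|Q| = (2 ^ (n * n2 - m * (n - 2 * k)))%N.
  by rewrite card_rho_code // cC1 cC2 -expnM -expnD eQ.
have cQp : #|Qp| = (2 ^ (n * n2 + m * (n - 2 * k)))%N.
  by rewrite card_rho_code // cC1p cC2 -expnM -expnD eQp.
have wtQ := concatenated_code_wt HF Homega HK m_gt0 Halpha Hb k2_lt HC2add HC2so HC2dist Hr.
have dQ : (d2 * (k + 1) <= qmindist Q Qp)%N.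
  apply: qmindist_ge wtQ; apply/negP => /subset_leq_card.
  by rewrite cQ cQp leq_exp2l // leqNgt ltQ.
do 6 (split=> //); move=> R rr rr' delta.
have n_gt0 : (0 < n)%N := leq_ltn_trans (leq0n _) k2_lt.
have delta_ge := relative_distance_ge R n_gt0 (leq_trans m_gt0 m_le) dQ.
split=> // [|h _ _ _ h_le]; first exact: code_rate (leq_trans m_gt0 m_le) (ltnW k2_lt).
by apply: le_trans delta_ge; rewrite mulrC ler_wpM2r // divr_ge0 ?ler0n.
Qed.
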